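(* Fix $\mathbf{x} \in \Omega$ and $\alpha \in [0,1)$, and let $C = \{s \in S : s = x_k \text{ for some } k \in \{1,\dots,n\}\}$ be the set of values occurring in $\mathbf{x}$. Then $$B_{T_\ell}^*(\mathbf{x}) = \min\{E[F] : F \in \mathcal{F}_{C^+}(\Omega(\mathbf{x},T_\ell),\alpha)\}.$$
   Context: Fix integers $m \ge 2$, $n \ge 1$ and reals $S_{\min} < S_{\max}$; $S = \{S_0,\dots,S_{m-1}\}$ with $S_k = S_{\min} + k\frac{S_{\max}-S_{\min}}{m-1}$. $\mathcal{F}$ is the set of probability distributions on $S$, identified with the probability simplex in $\mathbb{R}^m$ with the Euclidean topology; $E[F]$ is the mean. $\Omega$ is the set of samples of size $n$ from $S$, identified with their sorted versions $x_{(1)} \le \dots \le x_{(n)}$. $P_F[\Omega']$ is the probability that the sorted sample of $n$ i.i.d. draws from $F$ lies in $\Omega' \subseteq \Omega$; $\mathcal{G}(\Omega',\alpha) = \{F : P_F[\Omega'] > \alpha\}$ and $\mathcal{F}(\Omega',\alpha)$ is its closure. The low lexicographic order $T_\ell$: $\mathbf{x} \le_{T_\ell} \mathbf{y}$ iff $\mathbf{x}=\mathbf{y}$ or at the smallest index $j$ with $x_{(j)} \ne y_{(j)}$ we have $x_{(j)} < y_{(j)}$; $\Omega(\mathbf{x},T_\ell) = \{\mathbf{y} : \mathbf{x} \le_{T_\ell} \mathbf{y}\}$; $B_{T_\ell}^*(\mathbf{x}) = \min\{E[F] : F \in \mathcal{F}(\Omega(\mathbf{x},T_\ell),\alpha)\}$.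 For $C \subseteq S$: $\mathcal{F}_C = \{F \in \mathcal{F} : P_F[X = s] = 0 \ \forall s \in S\setminus C\}$, $\mathcal{G}_C(\Omega',\alpha) = \mathcal{F}_C \cap \mathcal{G}(\Omega',\alpha)$, $\mathcal{F}_C(\Omega',\alpha)$ is the closure of $\mathcal{G}_C(\Omega',\alpha)$, and $C^+ = C \cup \{S_{\min}\} \cup \{S_{j+1} : S_j \in C,\ j \le m-2\}$. *)

From HB Require Import structures.
From mathcomp Require Import all_boot all_order all_algebra.
From mathcomp Require Import all_classical all_reals.
From mathcomp Require Import topology normedtype.
Set Implicit Arguments. Unset Strict Implicit. Unset Printing Implicit Defensive.
Import Order.TTheory GRing.Theory Num.Theory.
Import numFieldNormedType.Exports.
Local Open Scope classical_set_scope.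
Local Open Scope ring_scope.

Section Defs.
Variable R : realType.
Variable m : nat.

Definition Sval (Smin Smax : R) (k : 'I_m) : R :=
  Smin + k%:R * ((Smax - Smin) / (m.-1)%:R).

(* Distributions on S = points of the probability simplex in R^m
   (row vectors; entry k is P_F[X = S_k]). *)
Definition simplex : set 'rV[R]_m :=
  [set F | (forall k, 0 <= F ord0 k) /\ \sum_k F ord0 k = 1].

Variable Sv : 'I_m -> R.

Definition Expect (F : 'rV[R]_m) : R := \sum_k F ord0 k * Sv k.

Definition valle (a b : 'I_m) : bool := Sv a <= Sv b.
Definition sortS (t : seq 'I_m) : seq 'I_m := sort valle t.

Definition Omega (n : nat) : pred (seq 'I_m) :=
  [pred y | (size y == n) && sorted valle y].

(* P_F[Omega'] : probability that the sorted sample of n iid draws lies in Omega' *)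
Definition prob (n : nat) (F : 'rV[R]_m) (Om' : pred (seq 'I_m)) : R :=
  \sum_(t : n.-tuple 'I_m | Om' (sortS t)) \prod_(i < n) F ord0 (tnth t i).

Fixpoint lexle (x y : seq 'I_m) : bool :=
  match x, y with
  | a :: x', b :: y' => if Sv a == Sv b then lexle x' y' else Sv a < Sv b
  | _, _ => true
  end.

Definition OmegaT (n : nat) (x : seq 'I_m) : pred (seq 'I_m) :=
  [pred y | Omega n y && lexle x y].

Definition Gset (n : nat) (Om' : pred (seq 'I_m)) (alpha : R) : set 'rV[R]_m :=
  [set F | simplex F /\ alpha < prob n F Om'].

(* closure within the simplex (subspace topology of the Euclidean topology) *)
Definition Fset (n : nat) (Om' : pred (seq 'I_m)) (alpha : R) : set 'rV[R]_m :=
  closure (Gset n Om' alpha) `&` simplex.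

Definition FC (C : pred 'I_m) : set 'rV[R]_m :=
  [set F | simplex F /\ forall k, ~~ C k -> F ord0 k = 0].

Definition GCset (C : pred 'I_m) (n : nat) (Om' : pred (seq 'I_m)) (alpha : R) :=
  FC C `&` Gset n Om' alpha.

Definition FCset (C : pred 'I_m) (n : nat) (Om' : pred (seq 'I_m)) (alpha : R) :=
  closure (GCset C n Om' alpha) `&` simplex.

Definition Cof (x : seq 'I_m) : pred 'I_m :=
  [pred k | has (fun a => Sv a == Sv k) x].

Definition Cplus (C : pred 'I_m) : pred 'I_m :=
  [pred k | [|| C k, val k == 0%N | [exists j : 'I_m, C j && ((val j).+1 == val k)]]].

End Defs.

Definition is_min (R : realType) (A : set R) (v : R) : Prop :=
  A v /\ (forall w, A w -> v <= w).

(* Let phi map each grid index b to the largest index of C^+ not exceeding b,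
   and push distributions forward along phi.  The pushforward lands in F_{C^+},
   does not increase the mean (phi b <= b), is continuous, and preserves
   P_F[Omega(x, T_l)]: phi is monotone, so it commutes with sorting, and for a
   value c of x both c and its grid successor lie in C^+, so comparing c with
   phi b gives the same answer as comparing it with b; hence every low
   lexicographic comparison with x is unchanged.  Thus the pushforward maps
   F(Omega(x, T_l), alpha) into its subset F_{C^+}(Omega(x, T_l), alpha).  The
   former is compact and contains the point mass at S_max (as alpha < 1), so
   the mean attains its minimum there at some F, and the pushforward of F
   attains the same value in the subset. *)

From HB Require Import structures.
From mathcomp Require Import all_boot all_order all_algebra.
From mathcomp Require Import all_classical all_reals.
From mathcomp Require Import topology normedtype derive.
Import Order.TTheory GRing.Theory Num.Theory.
Import numFieldNormedType.Exports.
Local Open Scope classical_set_scope.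
Local Open Scope ring_scope.
Set Implicit Arguments. Unset Strict Implicit. Unset Printing Implicit Defensive.

Section Continuity.
Variable R : realType.

Lemma continuous_sum (T : topologicalType) (V : normedModType R) (I : Type)
    (r : seq I) (f : I -> T -> V) :
  (forall i, continuous (f i)) -> continuous (fun x => \sum_(i <- r) f i x).
Proof.
move=> fc; rewrite (_ : (fun x => _) = \sum_(i <- r) f i); last first.
  by apply/funext => x; rewrite fct_sumE.
apply: (big_ind (fun g : T -> V => continuous g)) => // [|g h gc hc x].
  exact: (@cst_continuous T V 0).
exact: (continuousD (gc x) (hc x)).
Qed.

Lemma continuous_rV_comb (m : nat) (V : normedModType R) (w : 'I_m -> V) :
  continuous (fun F : 'rV[R]_m => \sum_k F ord0 k *: w k).
Proof.
apply: continuous_sum => k F; apply: continuousZr_tmp; exact: coord_continuous.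
Qed.

Lemma image_closure_sub (T U : topologicalType) (f : T -> U) (A : set T) :
  continuous f -> f @` closure A `<=` closure (f @` A).
Proof.
move=> fc _ [p Ap <-] B /fc /Ap [q [Aq Bq]].
by exists (f q); split => //; exists q.
Qed.

Lemma simplex_compact (m : nat) : compact (@simplex R m).
Proof.
have sum1 (F : 'rV[R]_m) : \sum_k F ord0 k *: (1 : R) = \sum_k F ord0 k.
  by apply: eq_bigr => k _; exact: mulr1.
have -> : @simplex R m = [set F : 'rV[R]_m | forall k, `[0, 1]%classic (F ord0 k)] `&`
                         (fun F : 'rV[R]_m => \sum_k F ord0 k *: (1 : R)) @^-1` [set 1].
  apply/seteqP; split => F /=; rewrite sum1.
    move=> [F0 F1]; split => // k; rewrite in_itv /= F0 -F1 (bigD1 k) //= lerDl.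
    by apply: sumr_ge0 => j _; exact: F0.
  by move=> [F01 F1]; split => // k; have := F01 k; rewrite in_itv /= => /andP[].
apply: compact_closedI; first exact: (rV_compact (fun=> @segment_compact R 0 1)).
exact: (continuous_closedP _).1
  (continuous_rV_comb (w := fun=> 1 : R)) _ (@closed_eq R 1).
Qed.

Lemma Expect_continuous (m : nat) (Sv : 'I_m -> R) : continuous (Expect Sv).
Proof. exact: (continuous_rV_comb (w := Sv)). Qed.

End Continuity.

Section FloorIn.
Variables (m : nat) (D : pred 'I_m).

Fact floor_in_subproof (b : 'I_m) :
  (\max_(k : 'I_m | (k <= b)%N && D k) val k < m)%N.
Proof.
apply: leq_ltn_trans (ltn_ord b).
by apply/bigmax_leqP => k /andP[].
Qed.

Definition floor_in (b : 'I_m) : 'I_m := Ordinal (floor_in_subproof b).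

Lemma floor_in_le (b : 'I_m) : (floor_in b <= b)%N.
Proof. by apply/bigmax_leqP => k /andP[]. Qed.

Lemma leq_floor_in (b k : 'I_m) : D k -> (k <= floor_in b)%N = (k <= b)%N.
Proof.
move=> Dk; apply/idP/idP => [kp | kb]; first exact: leq_trans kp (floor_in_le b).
by apply: (@leq_bigmax_cond _ _ (fun k : 'I_m => val k) k); rewrite kb.
Qed.

Lemma floor_in_mem (b k : 'I_m) : (k <= b)%N -> D k -> D (floor_in b).
Proof.
move=> kb Dk.
have : (0 < #|[pred k : 'I_m | (k <= b)%N && D k]|)%N.
  by apply/card_gt0P; exists k; rewrite inE kb.
move=> /(eq_bigmax_cond (fun k : 'I_m => val k)) [k' /andP[_ Dk'] max_k'].
by rewrite (_ : floor_in b = k') //; apply: val_inj.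
Qed.

Lemma floor_in_homo : {homo floor_in : a b / (a <= b)%N}.
Proof.
move=> a b ab; apply/bigmax_leqP => k /andP[ka Dk].
by rewrite leq_floor_in // (leq_trans ka).
Qed.

End FloorIn.

Section FloorCplus.
Variables (m : nat) (C : pred 'I_m).
Local Notation phi := (floor_in (Cplus C)).

Lemma floor_Cplus_mem (b : 'I_m) : Cplus C (phi b).
Proof.
have zero_b : (0 < m)%N by apply: leq_ltn_trans (ltn_ord b).
by apply: (@floor_in_mem _ _ _ (Ordinal zero_b)); rewrite /Cplus /= ?orbT.
Qed.

Lemma leq_floor_Cplus (c b : 'I_m) : C c -> (c <= phi b)%N = (c <= b)%N.
Proof. by move=> Cc; apply: leq_floor_in; rewrite /Cplus /= Cc. Qed.

Lemma ltn_floor_Cplus (c b : 'I_m) : C c -> (c < phi b)%N = (c < b)%N.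
Proof.
move=> Cc; have [c1m | ] := ltnP c.+1 m.
  apply: (@leq_floor_in _ _ _ (Ordinal c1m)); rewrite /Cplus /=.
  by apply/orP; right; apply/existsP; exists c; rewrite Cc eqxx.
move=> mc; have le_c (k : 'I_m) : (k <= c)%N by rewrite -ltnS (leq_trans _ mc).
by rewrite !ltnNge !le_c.
Qed.

End FloorCplus.

Section Samples.
Variables (R : realType) (m : nat) (Sv : 'I_m -> R).

Lemma valle_total : total (valle Sv).
Proof. by move=> a b; rewrite /valle le_total. Qed.

Lemma valle_trans : transitive (valle Sv).
Proof. by move=> b a c; rewrite /valle; apply: le_trans. Qed.

Lemma Omega_sortS n (t : n.-tuple 'I_m) : Omega Sv n (sortS Sv t).
Proof.
by rewrite /Omega /= size_sort size_tuple eqxx sort_sorted //; exact: valle_total.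
Qed.

Lemma lexle_nseq_max (t : 'I_m) (y : seq 'I_m) k :
  (forall a, Sv a <= Sv t) -> lexle Sv y (nseq k t).
Proof.
move=> t_max; elim: y k => [|a y IHy] [|k] //=.
by case: eqP => [_|/eqP ne]; [exact: IHy | rewrite lt_neqAle ne t_max].
Qed.

Lemma prod_le_prob n (F : 'rV[R]_m) (Om : pred (seq 'I_m)) (t : n.-tuple 'I_m) :
  simplex F -> Om (sortS Sv t) -> \prod_i F ord0 (tnth t i) <= prob Sv n F Om.
Proof.
move=> [F0 _] Omt; rewrite /prob (bigD1 t) //= lerDl.
by apply: sumr_ge0 => u _; apply: prodr_ge0 => i _; exact: F0.
Qed.

Definition point_mass (t : 'I_m) : 'rV[R]_m := \row_k (k == t)%:R.

Lemma point_mass_simplex (t : 'I_m) : simplex (point_mass t).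
Proof.
split=> [k|]; first by rewrite mxE ler0n.
rewrite (bigD1 t) //= mxE eqxx big1 ?addr0 // => k /negbTE kt.
by rewrite mxE kt.
Qed.

Lemma Gset_point_mass_max n x alpha (t : 'I_m) :
  (forall a, Sv a <= Sv t) -> alpha < 1 ->
  Gset Sv n (OmegaT Sv n x) alpha (point_mass t).
Proof.
move=> t_max alpha1; split; first exact: point_mass_simplex.
apply: (lt_le_trans alpha1).
have sorted_t : sorted (valle Sv) (nseq n t).
  by case: n => //= k; elim: k => //= k ->; rewrite /valle lexx.
have <- : \prod_(i < n) point_mass t ord0 (tnth [tuple of nseq n t] i) = 1.
  by apply: big1 => i _; rewrite tnth_nseq mxE eqxx.
apply: prod_le_prob; first exact: point_mass_simplex.
rewrite /sortS sorted_sort //; last exact: valle_trans.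
by rewrite /OmegaT /Omega /= size_nseq eqxx sorted_t lexle_nseq_max.
Qed.

Hypothesis Sv_lt : {mono Sv : a b / (a < b)%N >-> a < b}.

Lemma Sv_le : {mono Sv : a b / (a <= b)%N >-> a <= b}.
Proof. by move=> a b; rewrite leNgt Sv_lt -leqNgt. Qed.

Lemma Sv_eq (a b : 'I_m) : (Sv a == Sv b) = (a == b).
Proof. by rewrite eq_le !Sv_le -eqn_leq. Qed.

Lemma valle_anti : antisymmetric (valle Sv).
Proof. by move=> a b; rewrite /valle !Sv_le -eqn_leq => /eqP /val_inj. Qed.

Lemma sortS_map (f : 'I_m -> 'I_m) (s : seq 'I_m) :
  {homo f : a b / (a <= b)%N} -> sortS Sv (map f s) = map f (sortS Sv s).
Proof.
move=> f_homo; apply: (sorted_eq valle_trans valle_anti).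
- exact: (sort_sorted valle_total).
- apply: (homo_sorted (e := valle Sv)); last exact: (sort_sorted valle_total).
  by move=> a b; rewrite /valle !Sv_le; exact: f_homo.
- by rewrite perm_sort perm_map // perm_sym perm_sort.
Qed.

Lemma lexle_map (f : 'I_m -> 'I_m) (x y : seq 'I_m) :
  (forall a b, a \in x -> (a <= f b)%N = (a <= b)%N /\ (a < f b)%N = (a < b)%N) ->
  lexle Sv x (map f y) = lexle Sv x y.
Proof.
elim: x y => [|a x IHx] [|b y] //= f_cmp.
have [le_f lt_f] := f_cmp a b (mem_head _ _).
have eq_f : (a == f b) = (a == b).
  by rewrite -!val_eqE /= !eqn_leq [(f b <= a)%N]leqNgt [(b <= a)%N]leqNgt le_f lt_f.
rewrite !Sv_eq !Sv_lt eq_f lt_f IHx // => a' b' a'x.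
by apply: f_cmp; rewrite in_cons a'x orbT.
Qed.

Lemma OmegaT_sortS_floor n x (u : n.-tuple 'I_m) :
  OmegaT Sv n x (sortS Sv (map (floor_in (Cplus (Cof Sv x))) u)) =
  OmegaT Sv n x (sortS Sv u).
Proof.
set phi := floor_in _.
have phi_homo : {homo phi : a b / (a <= b)%N} by exact: floor_in_homo.
rewrite /OmegaT /= Omega_sortS.
have -> := Omega_sortS (map_tuple phi u).
rewrite /= (sortS_map _ phi_homo); apply: lexle_map => // a b ax.
have Ca : Cof Sv x a by apply/hasP; exists a.
by rewrite leq_floor_Cplus // ltn_floor_Cplus.
Qed.

End Samples.

Section Pushforward.
Variables (R : realType) (m : nat) (f : 'I_m -> 'I_m).

Definition pushfwd (F : 'rV[R]_m) : 'rV[R]_m := \row_k \sum_(j | f j == k) F ord0 j.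

Lemma sum_pushfwd (F : 'rV[R]_m) (w : 'I_m -> R) :
  \sum_k pushfwd F ord0 k * w k = \sum_j F ord0 j * w (f j).
Proof.
rewrite [RHS](partition_big f xpredT) //=; apply: eq_bigr => k _.
by rewrite mxE mulr_suml; apply: eq_bigr => j /eqP ->.
Qed.

Lemma pushfwd_simplex F : simplex F -> simplex (pushfwd F).
Proof.
move=> [F0 F1]; split => [k|].
  by rewrite mxE; apply: sumr_ge0 => j _; exact: F0.
have := sum_pushfwd F (fun=> 1); under eq_bigr do rewrite mulr1.
by under [RHS]eq_bigr do rewrite mulr1; move=> ->.
Qed.

Lemma pushfwd_FC (D : pred 'I_m) F :
  (forall j, D (f j)) -> simplex F -> FC D (pushfwd F).
Proof.
move=> Df sF; split => [|k Dk]; first exact: pushfwd_simplex.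
by rewrite mxE big1 // => j /eqP fjk; move: Dk; rewrite -fjk Df.
Qed.

Lemma Expect_pushfwd_le (Sv : 'I_m -> R) F :
  (forall j, Sv (f j) <= Sv j) -> simplex F -> Expect Sv (pushfwd F) <= Expect Sv F.
Proof.
move=> Sv_f [F0 _]; rewrite /Expect sum_pushfwd.
by apply: ler_sum => j _; apply: ler_wpM2l.
Qed.

Lemma pushfwd_continuous : continuous pushfwd.
Proof.
have -> : pushfwd = fun F => \sum_j F ord0 j *: delta_mx 0 (f j).
  apply/funext => F; apply/rowP => k; rewrite mxE summxE big_mkcond /=.
  by apply: eq_bigr => j _; rewrite !mxE eqxx eq_sym; case: eqP; rewrite ?mulr1 ?mulr0.
exact: (continuous_rV_comb (w := fun j => delta_mx 0 (f j))).
Qed.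

Lemma prod_pushfwd n (t : n.-tuple 'I_m) F :
  \prod_(i < n) pushfwd F ord0 (tnth t i) =
  \sum_(u : n.-tuple 'I_m | map_tuple f u == t) \prod_(i < n) F ord0 (tnth u i).
Proof.
under eq_bigr do rewrite mxE big_mkcond /=.
rewrite bigA_distr_bigA /=.
rewrite (reindex (fun u : n.-tuple 'I_m => [ffun i => tnth u i])) /=; last first.
  exists (fun g : {ffun 'I_n -> 'I_m} => [tuple g i | i < n]) => [u _|g _].
    by apply: eq_from_tnth => i; rewrite tnth_mktuple ffunE.
  by apply/ffunP => i; rewrite !ffunE tnth_mktuple.
rewrite [RHS]big_mkcond /=; apply: eq_bigr => u _.
under eq_bigr do rewrite ffunE.
case: eqP => [<-|ne]; first by apply: eq_bigr => i _; rewrite tnth_map eqxx.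
have /existsP [i fi] : [exists i, f (tnth u i) != tnth t i].
  apply: contraT; rewrite negb_exists => /forallP eq_ut; case: ne.
  by apply: eq_from_tnth => i; rewrite tnth_map; apply/eqP; rewrite -[_ == _]negbK.
by rewrite (bigD1 i) //= (negbTE fi) mul0r.
Qed.

Lemma prob_pushfwd (Sv : 'I_m -> R) n (Om : pred (seq 'I_m)) F :
  (forall u : n.-tuple 'I_m, Om (sortS Sv (map f u)) = Om (sortS Sv u)) ->
  prob Sv n (pushfwd F) Om = prob Sv n F Om.
Proof.
move=> Om_f; rewrite /prob.
rewrite [RHS](partition_big (map_tuple f) (fun t => Om (sortS Sv t))) => [|u]; last first.
  by rewrite /= Om_f.
apply: eq_bigr => t Omt; rewrite prod_pushfwd; apply: eq_bigl => u.
by case: eqP => [ft|]; rewrite ?andbF // andbT -Om_f; move: Omt; rewrite -ft.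
Qed.

Lemma pushfwd_Fset (D : pred 'I_m) (Sv : 'I_m -> R) n (Om : pred (seq 'I_m)) alpha F :
  (forall j, D (f j)) ->
  (forall u : n.-tuple 'I_m, Om (sortS Sv (map f u)) = Om (sortS Sv u)) ->
  Fset Sv n Om alpha F -> FCset Sv D n Om alpha (pushfwd F).
Proof.
move=> Df Om_f [clF sF]; split; last exact: pushfwd_simplex.
apply: (closureS (A := pushfwd @` Gset Sv n Om alpha)).
  move=> _ [G [sG pG] <-]; split; first exact: pushfwd_FC.
  by split; [exact: pushfwd_simplex | rewrite prob_pushfwd].
by apply: image_closure_sub; [exact: pushfwd_continuous | exists F].
Qed.

End Pushforward.

Lemma Sval_lt (R : realType) (m : nat) (Smin Smax : R) :
  (2 <= m)%N -> Smin < Smax -> {mono @Sval R m Smin Smax : a b / (a < b)%N >-> a < b}.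
Proof.
move=> m2 Sminmax a b; rewrite /Sval ltrD2l ltr_pM2r ?ltr_nat //.
by rewrite divr_gt0 ?subr_gt0 // ltr0n -ltnS prednK // ltnW.
Qed.

Unset Implicit Arguments.

Theorem theorem7 (R : realType) (m n : nat) (Smin Smax : R)
  (hm : (2 <= m)%N) (hn : (1 <= n)%N) (hS : Smin < Smax)
  (x : seq 'I_m) (hx : x \in Omega (Sval Smin Smax) n)
  (alpha : R) (ha0 : 0 <= alpha) (ha1 : alpha < 1) :
  let Sv := Sval Smin Smax in
  exists v : R,
    is_min (Expect Sv @` Fset Sv n (OmegaT Sv n x) alpha) v /\
    is_min (Expect Sv @` FCset Sv (Cplus (Cof Sv x)) n (OmegaT Sv n x) alpha) v.
Proof.
move=> Sv; set C := Cplus (Cof Sv x); set Om := OmegaT Sv n x.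
have Sv_lt := Sval_lt hm hS.
pose phi := floor_in C.
have top_lt : (m.-1 < m)%N by rewrite prednK // ltnW.
have top_max (a : 'I_m) : Sv a <= Sv (Ordinal top_lt).
  by rewrite (Sv_le Sv_lt) /= -ltnS prednK // ltnW.
have F_ne : Fset Sv n Om alpha !=set0.
  exists (point_mass R (Ordinal top_lt)); split; last exact: point_mass_simplex.
  by apply: subset_closure; apply: Gset_point_mass_max.
have F_compact : compact (Fset Sv n Om alpha).
  rewrite /Fset setIC; apply: compact_closedI; first exact: simplex_compact.
  exact: closed_closure.
have [F1 /set_mem F1_in F1_min] :=
  compact_EVT_min F_ne F_compact (continuous_subspaceT (@Expect_continuous R m Sv)).
have FC_sub : FCset Sv C n Om alpha `<=` Fset Sv n Om alpha.
  by move=> F [clF sF]; split => //; apply: closureS clF => G [].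
have phiF1 : FCset Sv C n Om alpha (pushfwd phi F1).
  apply: pushfwd_Fset F1_in; first exact: floor_Cplus_mem.
  by move=> u; apply: OmegaT_sortS_floor.
have min_F1 : forall F, Fset Sv n Om alpha F -> Expect Sv F1 <= Expect Sv F.
  by move=> F FF; apply: F1_min; apply: mem_set.
exists (Expect Sv F1); split; split.
- by exists F1.
- by move=> _ [F FF <-]; exact: min_F1.
- exists (pushfwd phi F1) => //; apply/le_anti/andP; split; last exact/min_F1/FC_sub.
  apply: (Expect_pushfwd_le _ F1_in.2) => j; rewrite (Sv_le Sv_lt); exact: floor_in_le.
- by move=> _ [F FF <-]; apply: min_F1; exact: FC_sub.
Qed.
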